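(* Let $\mathbb F\subseteq\mathbb D$ be finite and $n:=\mathrm{lh}(\mathbb F)$. Then there exist $m\in\mathbb N$ and a finite sequence $\mathbb F=:\mathbb F_0,\mathbb F_1,\dots,\mathbb F_N$ with $\mathbb F_l=\Phi_{h_l}^{(i_l)}(\mathbb F_{l-1})$ for some $\mathbb F_{l-1}$-admissible index $(h_l,i_l)\in\mathbb F_{l-1}$ ($l=1,\dots,N$), such that $\mathbb F_N\subseteq\mathbb D_{m+1}^{m+n}$.
   Context: Dyadic intervals: $\Delta_k^{(j)}:=[\frac{j-1}{2^k},\frac{j}{2^k})$ for $k\ge0$. Dyadic tree $\mathbb D:=\{(k,j):k\ge1;\ j=1,\dots,2^{k-1}\}$; $\mathbb D_m^n:=\{(k,j):k=m,\dots,n;\ j=1,\dots,2^{k-1}\}$. Branches: $\mathbb B(t):=\{(k,j)\in\mathbb D:t\in\Delta_{k-1}^{(j)}\}$; local height $\mathrm{lh}(\mathbb F):=\max_{t\in[0,1)}|\mathbb F\cap\mathbb B(t)|$. An index $(h,i)\in\mathbb F$ is $\mathbb F$-admissible if neither $(h+1,2i-1)$ nor $(h+1,2i)$ belongs to $\mathbb F$. Fork: $\mathbb F_h^{(i)}:=\{(h,i),(h+1,2i-1),(h+1,2i)\}$. For $(k,j)\in\mathbb D$ define $j^\ast$: $j^\ast=j+2^{k-h-2}$ if $\Delta_{k-1}^{(j)}\subseteq\Delta_{h+1}^{(4i-2)}$; $j^\ast=j-2^{k-h-2}$ if $\Delta_{k-1}^{(j)}\subseteq\Delta_{h+1}^{(4i-1)}$;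 $j^\ast=j$ otherwise. Then $\Phi_h^{(i)}(\mathbb F):=\{(h+1,2i-1),(h+1,2i)\}\cup\{(k,j^\ast):(k,j)\in\mathbb F\setminus\mathbb F_h^{(i)}\}$. *)

From HB Require Import structures.
From mathcomp Require Import all_boot all_order all_algebra.
From mathcomp Require Import finmap.
From mathcomp Require Import reals.
Set Implicit Arguments. Unset Strict Implicit. Unset Printing Implicit Defensive.
Import Order.TTheory GRing.Theory Num.Theory.
Delimit Scope ring_scope with R.

Local Open Scope fset_scope.

Definition idx := (nat * nat)%type.

Definition inD (p : idx) : bool := (1 <= p.1)%N && (1 <= p.2 <= 2 ^ p.1.-1)%N.

Definition inDmn (m n : nat) (p : idx) : bool :=
  (m <= p.1 <= n)%N && (1 <= p.2 <= 2 ^ p.1.-1)%N.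

Definition inDelta (R : realType) (k j : nat) (t : R) : bool :=
  (((j%:R - 1) / 2 ^+ k <= t) && (t < j%:R / 2 ^+ k))%R.

Definition inBranch (R : realType) (t : R) (p : idx) : bool :=
  inD p && inDelta p.1.-1 p.2 t.

Definition branch_count (R : realType) (F : {fset idx}) (t : R) : nat :=
  #|` [fset p in F | inBranch t p] |.

Definition is_lh (R : realType) (F : {fset idx}) (n : nat) : Prop :=
  (exists2 t : R, (0 <= t < 1)%R & branch_count F t = n) /\
  (forall t : R, (0 <= t < 1)%R -> (branch_count F t <= n)%N).

Definition admissible (F : {fset idx}) (h i : nat) : bool :=
  [&& (h, i) \in F, (h.+1, (2 * i).-1) \notin F & (h.+1, 2 * i) \notin F].

Definition fork (h i : nat) : {fset idx} :=
  [fset (h, i); (h.+1, (2 * i).-1); (h.+1, 2 * i)].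

(* For j, j' >= 1:  Delta_k^{(j)} \subseteq Delta_{k'}^{(j')}  iff
   k' <= k and the (j-1)-th dyadic interval of level k lies in the
   (j'-1)-th one of level k', i.e. (j-1) / 2^(k-k') = j'-1. *)
Definition dsub (k j k' j' : nat) : bool :=
  (k' <= k)%N && ((j.-1 %/ 2 ^ (k - k'))%N == j'.-1).

Definition jstar (h i k j : nat) : nat :=
  if dsub k.-1 j h.+1 (4 * i - 2) then (j + 2 ^ (k - h - 2))%N
  else if dsub k.-1 j h.+1 (4 * i - 1) then (j - 2 ^ (k - h - 2))%N
  else j.

Definition Phi (h i : nat) (F : {fset idx}) : {fset idx} :=
  [fset (h.+1, (2 * i).-1); (h.+1, 2 * i)] `|`
  [fset (p.1, jstar h i p.1 p.2) | p in F `\` fork h i].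

From HB Require Import structures.
From mathcomp Require Import all_boot all_order all_algebra.
From mathcomp Require Import finmap.
From mathcomp Require Import reals.
From mathcomp Require Import zify.
Import GRing.Theory Num.Theory.

(* Phi_h^(i) removes an admissible (h, i), inserts its two children and moves the
   descendants of the two middle quarters of Delta_(h-1)^(i) onto each other.  On
   branches this is the exchange sigma of those two quarters: each index of
   Phi(F) on the branch through t comes from an index of F on the branch through
   sigma t, the two children being paid for by the removed (h, i).  Hence local
   heights never grow, while sum_k 3^(M-k) #{indices of level k} strictly drops.
   When no index below the top level M is admissible any more, every index of
   level k starts a chain of children down to level M, all on one branch, so
   M - k < n.  Branches only need to be evaluated at the points x / 2^M. *)

Definition swap_blocks (s a x : nat) : nat :=
  if x %/ s == a then x + s else if x %/ s == a.+1 then x - s else x.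

Section SwapBlocks.
Variables (s a : nat).
Hypothesis s_gt0 : 0 < s.

Lemma divnDd x : (x + s) %/ s = (x %/ s).+1.
Proof. by rewrite -[in x + s](mul1n s) divnDMl // addn1. Qed.

Lemma divnBd x : (x - s) %/ s = (x %/ s).-1.
Proof. by rewrite -[in x - s](mul1n s) divnBMl subn1. Qed.

Lemma swap_blocks_id x : x %/ s != a -> x %/ s != a.+1 -> swap_blocks s a x = x.
Proof. by rewrite /swap_blocks => /negPf-> /negPf->. Qed.

Lemma swap_blocksK : involutive (swap_blocks s a).
Proof.
move=> x; rewrite {2}/swap_blocks.
have [xa|xa] := eqVneq (x %/ s) a.
  by rewrite /swap_blocks divnDd xa eqn_leq ltnn eqxx addnK.
have [xa1|xa1] := eqVneq (x %/ s) a.+1; last by rewrite swap_blocks_id.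
have s_le_x : s <= x by rewrite -(divn_gt0 _ s_gt0) xa1.
by rewrite /swap_blocks divnBd xa1 eqxx subnK.
Qed.

Lemma swap_blocks_divnMr t P x : 0 < t ->
  swap_blocks (t * P) a x %/ t = swap_blocks P a (x %/ t).
Proof.
move=> t_gt0; rewrite /swap_blocks divnMA [t * P]mulnC.
case: ifP => _; first by rewrite divnDMl.
by case: ifP => _ //; rewrite divnBMl.
Qed.

Lemma swap_blocks_divnMl Q x : a %/ Q = a.+1 %/ Q ->
  swap_blocks s a x %/ (s * Q) = x %/ (s * Q).
Proof.
move=> aQ; rewrite !divnMA /swap_blocks.
have [xa|_] := eqVneq (x %/ s) a; first by rewrite divnDd xa aQ.
by have [xa1|//] := eqVneq (x %/ s) a.+1; rewrite divnBd xa1 aQ.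
Qed.

Lemma swap_blocks_ltn b x : a.+1 < b -> x < s * b -> swap_blocks s a x < s * b.
Proof.
move=> ab xb; rewrite /swap_blocks.
have [xa|_] := eqVneq (x %/ s) a.
  by have := ltn_ceil x s_gt0; rewrite xa; nia.
by case: ifP => _ //; apply: leq_ltn_trans (leq_subr _ _) xb.
Qed.

End SwapBlocks.

Lemma jstar_small h i k j : k < h.+2 -> jstar h i k j = j.
Proof.
by move=> kh; rewrite /jstar /dsub (_ : h.+1 <= k.-1 = false) //; apply/negbTE; lia.
Qed.

Lemma jstar_swap h i k j : 0 < i -> 0 < j -> h.+2 <= k ->
  jstar h i k j = (swap_blocks (2 ^ (k - h.+2)) (4 * i - 3) j.-1).+1.
Proof.
move=> i_gt0 j_gt0 hk; rewrite /jstar /dsub /swap_blocks.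
have -> : h.+1 <= k.-1 by lia.
have -> : k.-1 - h.+1 = k - h.+2 by lia.
have -> : k - h - 2 = k - h.+2 by lia.
have -> : (4 * i - 2).-1 = 4 * i - 3 by lia.
have -> : (4 * i - 1).-1 = (4 * i - 3).+1 by lia.
have [->|_] /= := eqVneq (j.-1 %/ 2 ^ (k - h.+2)) (4 * i - 3); first lia.
have [ja1|_] //= := eqVneq (j.-1 %/ 2 ^ (k - h.+2)) (4 * i - 3).+1; last lia.
have P_gt0 : 0 < 2 ^ (k - h.+2) by rewrite expn_gt0.
have : 2 ^ (k - h.+2) <= j.-1 by rewrite -(divn_gt0 _ P_gt0) ja1.
lia.
Qed.

Lemma inDmn1E M p : inDmn 1 M p = inD p && (p.1 <= M).
Proof. by rewrite /inDmn /inD -!andbA; case: (p.1 <= M); rewrite ?andbT ?andbF. Qed.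

Lemma inDmn_widen m n n' p : n <= n' -> inDmn m n p -> inDmn m n' p.
Proof. by rewrite /inDmn; lia. Qed.

Lemma inD_jstar h i k j : inD (h, i) -> inD (k, j) -> inD (k, jstar h i k j).
Proof.
case/and3P=> /= h_gt0 i_gt0 i_le /and3P[/= k_gt0 j_gt0 j_le].
have [hk|kh] := leqP h.+2 k; last by rewrite jstar_small // /inD /= k_gt0 j_gt0 j_le.
rewrite jstar_swap // /inD /= k_gt0 /=.
have Dk : 2 ^ k.-1 = 2 ^ (k - h.+2) * (4 * 2 ^ h.-1).
  by rewrite -[4]/(2 ^ 2) -!expnD; congr (_ ^ _); lia.
by rewrite Dk; apply: swap_blocks_ltn; rewrite ?expn_gt0 -?Dk; lia.
Qed.

Lemma Phi_inDmn M h i F : admissible F h i -> h < M ->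
  (forall p, p \in F -> inDmn 1 M p) -> forall p, p \in Phi h i F -> inDmn 1 M p.
Proof.
case/and3P=> hiF _ _ hM FD p.
have /andP[hiD _] : inD (h, i) && (h <= M) by rewrite -inDmn1E FD.
have h_gt0 : 0 < h by case/and3P: hiD.
have children_inD c : (c == (2 * i).-1) || (c == 2 * i) -> inD (h.+1, c).
  by move: hiD; rewrite /inD /= -[in 2 ^ h](prednK h_gt0) expnS; lia.
rewrite /Phi !inE inDmn1E => /orP[/orP[]/eqP->|/imfsetP[[k j] /= kjF ->]].
- by rewrite children_inD ?eqxx.
- by rewrite children_inD ?eqxx ?orbT.
move: kjF; rewrite !inE => /andP[_] /FD; rewrite !inDmn1E => /andP[kjD ->].
by rewrite inD_jstar.
Qed.

Section DyadicPoints.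
Variable E : nat.

(* [covers (k, j) x] iff the point x / 2^(E-1) lies in Delta_(k-1)^(j), for k <= E. *)
Definition covers (p : idx) (x : nat) : bool := x %/ 2 ^ (E - p.1) == p.2.-1.

Lemma covers_lo k j : covers (k, j) (j.-1 * 2 ^ (E - k)).
Proof. by rewrite /covers mulnK ?expn_gt0. Qed.

Lemma covers_bounds k j x : covers (k, j) x ->
  j.-1 * 2 ^ (E - k) <= x < j.-1.+1 * 2 ^ (E - k).
Proof.
by rewrite /covers /= => /eqP <-; rewrite leq_divM ltn_ceil ?expn_gt0.
Qed.

Lemma covers_ltn p x : inDmn 1 E p -> covers p x -> x < 2 ^ E.-1.
Proof.
case: p => k j; rewrite /inDmn /= => /andP[/andP[k_gt0 kE] /andP[j_gt0 j_le]].
move=> /covers_bounds /andP[_ x_lt]; apply: leq_trans x_lt _.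
rewrite prednK // (_ : E.-1 = k.-1 + (E - k)); last lia.
by rewrite expnD leq_mul2r j_le orbT.
Qed.

Lemma covers_uniq k j j' x : covers (k, j) x -> covers (k, j') x -> j.-1 = j'.-1.
Proof. by rewrite /covers /= => /eqP-> /eqP. Qed.

Lemma covers_child k j c x : k < E -> (c == (2 * j).-1) || (c == 2 * j) ->
  covers (k.+1, c) x -> covers (k, j) x.
Proof.
move=> kE c_child; rewrite /covers /=.
have -> : 2 ^ (E - k) = 2 ^ (E - k.+1) * 2 by rewrite -expnSr; congr (_ ^ _); lia.
by rewrite divnMA => /eqP->; apply/eqP; case/orP: c_child => /eqP->; lia.
Qed.

(* Exchanges the quarters Delta_(h+1)^(4i-2) and Delta_(h+1)^(4i-1) of Delta_(h-1)^(i). *)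
Definition mid_swap h i := swap_blocks (2 ^ (E - h.+2)) (4 * i - 3).

Lemma mid_swap_coarse h i k x : k <= h -> h.+2 <= E ->
  mid_swap h i x %/ 2 ^ (E - k) = x %/ 2 ^ (E - k).
Proof.
move=> kh hE.
have -> : 2 ^ (E - k) = 2 ^ (E - h.+2) * (4 * 2 ^ (h - k)).
  by rewrite -[4]/(2 ^ 2) -!expnD; congr (_ ^ _); lia.
apply: swap_blocks_divnMl; first by rewrite expn_gt0.
by rewrite !divnMA; congr (_ %/ _); lia.
Qed.

Lemma covers_mid_swap_parent h i c x : h.+2 <= E ->
  (c == (2 * i).-1) || (c == 2 * i) ->
  covers (h.+1, c) x -> covers (h, i) (mid_swap h i x).
Proof.
move=> hE c_child /(@covers_child h i c x _ c_child) cov.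
by rewrite /covers /= mid_swap_coarse //; apply: cov; lia.
Qed.

Lemma covers_jstar h i k j x : 0 < i -> 0 < j -> h.+2 <= E -> k <= E ->
  (k, j) \notin fork h i -> covers (k, jstar h i k j) x -> covers (k, j) (mid_swap h i x).
Proof.
move=> i_gt0 j_gt0 hE kE; rewrite /fork !inE !xpair_eqE !negb_or => /andP[/andP[_ nc1] nc2].
have [hk|kh] := leqP h.+2 k.
  rewrite jstar_swap // /covers /mid_swap /= => /eqP xj.
  have -> : 2 ^ (E - h.+2) = 2 ^ (E - k) * 2 ^ (k - h.+2).
    by rewrite -expnD; congr (_ ^ _); lia.
  by rewrite swap_blocks_divnMr ?expn_gt0 // xj swap_blocksK ?expn_gt0.
rewrite jstar_small // /covers /=.
have [kh1|kh1] := leqP k h; first by rewrite mid_swap_coarse.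
have {kh kh1} ? : k = h.+1 by lia.
subst k; rewrite eqxx /= in nc1 nc2 => xj.
have uj : x %/ 2 ^ (E - h.+2) %/ 2 = j.-1.
  by rewrite -divnMA -expnSr (_ : (E - h.+2).+1 = E - h.+1) ?(eqP xj) //; lia.
rewrite /mid_swap swap_blocks_id ?expn_gt0 //; lia.
Qed.

End DyadicPoints.

Local Open Scope fset_scope.

Section PhiCounting.
Variables (P : pred idx) (h i : nat) (F : {fset idx}).

Lemma card_sep_Phi :
  #|` [fset p in Phi h i F | P p]| <=
  #|` [fset q in [fset (h.+1, (2 * i).-1); (h.+1, 2 * i)] | P q]| +
  #|` [fset p in F `\` fork h i | P (p.1, jstar h i p.1 p.2)]|.
Proof.
set f := fun p : idx => (p.1, jstar h i p.1 p.2).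
set C := [fset q in [fset (h.+1, (2 * i).-1); (h.+1, 2 * i)] | P q].
set B := [fset p in F `\` fork h i | P (f p)].
have sub : [fset p in Phi h i F | P p] `<=` C `|` f @` B.
  apply/fsubsetP => p; rewrite !inE => /andP[/orP[pC|/imfsetP[q qF ->]] Pp].
    by rewrite pC Pp.
  by apply/orP; right; apply/imfsetP; exists q => //; rewrite !inE in qF *; rewrite qF.
apply: leq_trans (fsubset_leq_card sub) _.
by apply: leq_trans (leq_card_fsetU _ _) _; rewrite leq_add2l leq_imfset_card.
Qed.

Lemma card_sep_fset2 (a b : idx) : #|` [fset q in [fset a; b] | P q]| <= P a + P b.
Proof.
have sep1 c : #|` [fset q in [fset c] | P q]| <= P c.
  case: (boolP (P c)) => Pc.
    rewrite /= -(cardfs1 c) fsubset_leq_card //.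
    by apply/fsubsetP => q; rewrite !inE => /andP[].
  rewrite /= leqn0 cardfs_eq0 -fsubset0; apply/fsubsetP => q.
  by rewrite !inE => /andP[/eqP-> Pc']; rewrite Pc' in Pc.
have sub : [fset q in [fset a; b] | P q] `<=`
           [fset q in [fset a] | P q] `|` [fset q in [fset b] | P q].
  by apply/fsubsetP => q; rewrite !inE => /andP[/orP[]-> ->]; rewrite ?orbT.
apply: leq_trans (fsubset_leq_card sub) _; apply: leq_trans (leq_card_fsetU _ _) _.
exact: leq_add.
Qed.

Lemma card_sep_fork : (h, i) \in F ->
  #|` [fset p in F `\` fork h i | P p]| + P (h, i) <= #|` [fset p in F | P p]|.
Proof.
move=> hiF.
have sub : [fset p in F `\` fork h i | P p] `<=` [fset p in F | P p] `\ (h, i).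
  by apply/fsubsetP => p; rewrite !inE => /andP[/andP[/norP[/norP[-> _] _] ->] ->].
case: (boolP (P (h, i))) => P_hi.
  have hiP : (h, i) \in [fset p in F | P p] by rewrite !inE hiF.
  rewrite /= addn1 (cardfsD1 (h, i) [fset p in F | P p]) hiP add1n ltnS.
  exact: fsubset_leq_card.
by rewrite addn0 (fsubset_leq_card (fsubset_trans sub (fsubD1set _ _))).
Qed.

End PhiCounting.

Definition level_size (F : {fset idx}) k := #|` [fset p in F | p.1 == k]|.

Lemma level_size_Phi h i F k : admissible F h i ->
  level_size (Phi h i F) k + (h == k) <= level_size F k + 2 * (h.+1 == k).
Proof.
case/and3P=> hiF _ _; rewrite /level_size.
apply: leq_trans (leq_add (card_sep_Phi _ h i F) (leqnn _)) _.
rewrite -addnA addnC; apply: leq_add; first exact: card_sep_fork.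
by apply: leq_trans (card_sep_fset2 _ _ _) _; rewrite /= addnn -mul2n.
Qed.

Lemma sum_indicator n h (w : nat -> nat) : h < n -> \sum_(k < n) (h == k) * w k = w h.
Proof.
move=> hn; rewrite (eq_bigr (fun k : 'I_n => if k == h :> nat then w k else 0)).
  by rewrite -big_mkcond big_ord1_eq hn.
by move=> k _; rewrite eq_sym; case: (_ == _); rewrite ?mul1n ?mul0n.
Qed.

(* One index at level h outweighs two at level h + 1. *)
Definition potential M F := \sum_(k < M.+1) level_size F k * 3 ^ (M - k).

Lemma potential_Phi M h i F : admissible F h i -> h < M ->
  potential M (Phi h i F) < potential M F.
Proof.
move=> adm hM.
have : \sum_(k < M.+1) (level_size (Phi h i F) k * 3 ^ (M - k) + (h == k) * 3 ^ (M - k))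
    <= \sum_(k < M.+1) (level_size F k * 3 ^ (M - k) + (h.+1 == k) * (2 * 3 ^ (M - k))).
  by apply: leq_sum => k _; rewrite mulnCA mulnA -!mulnDl leq_mul2r level_size_Phi ?orbT.
rewrite !big_split /= (@sum_indicator M.+1 h (fun k => 3 ^ (M - k)) (ltnW hM)).
rewrite (@sum_indicator M.+1 h.+1 (fun k => 2 * 3 ^ (M - k)) hM).
rewrite -/(potential M (Phi h i F)) -/(potential M F).
have -> : M - h = (M - h.+1).+1 by lia.
rewrite expnS; have : 0 < 3 ^ (M - h.+1) by rewrite expn_gt0.
lia.
Qed.

Definition branch_size E (F : {fset idx}) x := #|` [fset p in F | covers E p x]|.

Lemma branch_size_Phi E h i F x : h.+2 <= E -> admissible F h i ->
  (forall p, p \in F -> inDmn 1 E p) ->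
  branch_size E (Phi h i F) x <= branch_size E F (mid_swap E h i x).
Proof.
move=> hE adm FD; have /and3P[hiF _ _] := adm.
have i_gt0 : 0 < i by case/andP: (FD _ hiF) => _ /andP[].
apply: leq_trans (card_sep_Phi _ h i F) _.
apply: leq_trans _ (card_sep_fork (fun p => covers E p (mid_swap E h i x)) h i F hiF).
rewrite addnC; apply: leq_add.
  apply: fsubset_leq_card; apply/fsubsetP => -[k j].
  rewrite !inE /= => /andP[/andP[nfork kjF] cov]; rewrite nfork kjF /=.
  have /andP[/andP[_ kE] /andP[j_gt0 _]] := FD _ kjF.
  by apply: covers_jstar; rewrite // /fork !inE.
(* At most one child covers x, and then (h, i) covers mid_swap x. *)
apply: leq_trans (card_sep_fset2 _ _ _) _.
case: (boolP (covers E _ x)) => c1; case: (boolP (covers E _ x)) => c2 //=.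
- by have := covers_uniq _ _ _ _ _ c1 c2; lia.
- by rewrite (@covers_mid_swap_parent E h i ((2 * i).-1)) ?eqxx.
- by rewrite (@covers_mid_swap_parent E h i (2 * i)) ?eqxx ?orbT.
Qed.

Lemma exists_long_branch E M F : M <= E -> (forall p, p \in F -> inDmn 1 M p) ->
  {in F, forall p, ~~ ((p.1 < M) && admissible F p.1 p.2)} ->
  forall p, p \in F -> exists x,
    covers E p x /\ M - p.1 < #|` [fset q in F | covers E q x && (p.1 <= q.1)]|.
Proof.
move=> ME FD noadm p pF; have [d dE] : {d | M - p.1 = d} by exists (M - p.1).
elim: d p pF dE => [|d IH] [k j] kjF /= dE.
  exists (j.-1 * 2 ^ (E - k)); split; first exact: covers_lo.
  by rewrite dE cardfs_gt0; apply/fset0Pn; exists (k, j); rewrite !inE kjF covers_lo /=.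
have kM : k < M by lia.
have [c cF c_child] : exists2 c, (k.+1, c) \in F & (c == (2 * j).-1) || (c == 2 * j).
  move: (noadm _ kjF); rewrite /= kM /admissible kjF /= negb_and !negbK.
  by case/orP=> cF; [exists (2 * j).-1 | exists (2 * j)]; rewrite ?eqxx ?orbT.
have dE' : M - k.+1 = d by lia.
have [x [cx long]] := IH _ cF dE'.
have kjx : covers E (k, j) x by apply: covers_child cx; rewrite ?c_child //; lia.
exists x; split => //.
have kj_in : (k, j) \in [fset q in F | covers E q x && (k <= q.1)] by rewrite !inE kjF kjx /=.
rewrite (cardfsD1 (k, j)) kj_in add1n (_ : M - k = (M - k.+1).+1) ?ltnS; last lia.
apply: leq_trans long (fsubset_leq_card _).
apply/fsubsetP => q; rewrite !inE => /andP[qF /andP[qx kq]].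
rewrite qF qx ltnW //= andbT; by apply: contraTneq kq => ->; rewrite /= ltnn.
Qed.

Section RealPoints.
Local Open Scope ring_scope.

Lemma covers_inBranch (R : realType) E p x : inDmn 1 E p -> covers E p x ->
  inBranch (x%:R / 2 ^+ E.-1 : R) p.
Proof.
case: p => k j kjD /covers_bounds /andP[lo hi].
have /andP[/andP[k_gt0 kE] /andP[j_gt0 _]] : (0 < k <= E)%N && (0 < j <= 2 ^ k.-1)%N := kjD.
have scale a : a%:R / 2 ^+ k.-1 * 2 ^+ E.-1 = (a * 2 ^ (E - k))%:R :> R.
  rewrite (_ : E.-1 = (k.-1 + (E - k))%N); last lia.
  by rewrite exprD natrM natrX mulrA mulfVK // expf_neq0 // pnatr_eq0.
rewrite /inBranch (_ : inD (k, j)); last by move: kjD; rewrite inDmn1E => /andP[].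
rewrite /inDelta /= ler_pdivlMr ?ltr_pdivrMr ?exprn_gt0 //.
rewrite -[j%:R - 1](natrB _ j_gt0) subn1 scale ler_nat lo /=.
by rewrite scale ltr_nat -(prednK j_gt0).
Qed.

Lemma branch_size_le_lh (R : realType) E (F : {fset idx}) n :
  (forall p, p \in F -> inDmn 1 E p) -> is_lh R F n -> forall x, (branch_size E F x <= n)%N.
Proof.
move=> FD [_ lh_max] x.
rewrite /branch_size; have [->|[p]] := fset_0Vmem [fset p in F | covers E p x].
  by rewrite cardfs0.
rewrite !inE => /andP[pF px].
have t_in : 0 <= (x%:R / 2 ^+ E.-1 : R) < 1.
  rewrite divr_ge0 ?exprn_ge0 //= ltr_pdivrMr ?exprn_gt0 // mul1r -natrX ltr_nat.
  exact: covers_ltn (FD _ pF) px.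
apply: leq_trans (lh_max _ t_in); apply: fsubset_leq_card; apply/fsubsetP => q.
by rewrite !inE => /andP[qF qx]; rewrite qF covers_inBranch ?FD.
Qed.

End RealPoints.

Definition Phi_reaches (F : {fset idx}) (P : {fset idx} -> Prop) : Prop :=
  exists (N : nat) (Fs : nat -> {fset idx}),
    [/\ Fs 0 = F,
        (forall l, 1 <= l <= N ->
           exists h i, admissible (Fs l.-1) h i /\ Fs l = Phi h i (Fs l.-1))
      & P (Fs N)].

Lemma Phi_reaches_now F (P : {fset idx} -> Prop) : P F -> Phi_reaches F P.
Proof. by exists 0, (fun=> F); split=> // -[]. Qed.

Lemma Phi_reaches_step h i F P : admissible F h i ->
  Phi_reaches (Phi h i F) P -> Phi_reaches F P.
Proof.
move=> adm [N [Fs [Fs0 steps FsN]]].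
exists N.+1, (fun l => if l is l'.+1 then Fs l' else F); split=> // -[|[|l]] //= l_le.
  by exists h, i; rewrite Fs0.
exact: (steps l.+1).
Qed.

Lemma Phi_reaches_top_levels M n (F : {fset idx}) : (forall p, p \in F -> inDmn 1 M p) ->
  (forall x, branch_size M.+1 F x <= n) ->
  Phi_reaches F (fun G => forall p, p \in G -> inDmn (M - n).+1 (M - n + n) p).
Proof.
have [P] := ubnP (potential M F); elim: P F => // P IH F pot_lt FD thin.
have FD' p : p \in F -> inDmn 1 M.+1 p by move/FD; apply: inDmn_widen.
case: (boolP (has (fun p : idx => (p.1 < M) && admissible F p.1 p.2) F)).
  case/hasP=> -[h i] _ /= /andP[hM adm]; apply: (@Phi_reaches_step h i _ _ adm); apply: IH.
  - exact: leq_trans (potential_Phi _ _ _ _ adm hM) pot_lt.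
  - exact: Phi_inDmn _ _ _ _ adm hM FD.
  - by move=> x; apply: leq_trans (branch_size_Phi M.+1 h i F x hM adm FD') (thin _).
move/hasPn=> noadm; apply: Phi_reaches_now => p pF.
have [x [_ long]] := exists_long_branch M.+1 M F (leqnSn M) FD noadm p pF.
have : M - p.1 < n.
  apply: leq_trans long (leq_trans _ (thin x)); apply: fsubset_leq_card.
  by apply/fsubsetP => q; rewrite !inE => /andP[-> /andP[-> _]].
by move: (FD _ pF); case: p pF long => k j _ _; rewrite /inDmn /=; lia.
Qed.

Theorem lemma3p8 (R : realType) (F : {fset idx}) (n : nat) :
  (forall p, p \in F -> inD p) ->
  is_lh R F n ->
  exists (m N : nat) (Fs : nat -> {fset idx}),
    [/\ Fs 0%N = F,
        (forall l, (1 <= l <= N)%N ->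
           exists h i, admissible (Fs l.-1) h i /\ Fs l = Phi h i (Fs l.-1))
      & (forall p, p \in Fs N -> inDmn m.+1 (m + n) p)].
Proof.
move=> FD lh; set M := \max_(p <- F) p.1.
have FM p : p \in F -> inDmn 1 M p.
  by move=> pF; rewrite inDmn1E FD //=; apply: leq_bigmax_seq.
exists (M - n); apply: Phi_reaches_top_levels => //.
by apply: branch_size_le_lh lh => p /FM; apply: inDmn_widen.
Qed.
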